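(* Let $G=(V,E)$ be a finite, simple, undirected, connected graph with no isolated vertices, and suppose $G$ has at least one split independent set. Then every maximal split independent set $S$ of $G$ is a minimal split dominating set of $G$.
   Context: For $X\subseteq V$, $\langle X\rangle$ denotes the induced subgraph on $X$. A set $D\subseteq V$ is dominating if every vertex of $V\setminus D$ has a neighbor in $D$. A dominating set $S$ is a split dominating set if $\langle V\setminus S\rangle$ is disconnected or a $K_1$. A split dominating set $S$ is a minimal split dominating set if for every $u\in S$ the set $S\setminus\{u\}$ is not a split dominating set (i.e. either $S\setminus\{u\}$ is not dominating, or $\langle (V\setminus S)\cup\{u\}\rangle$ is connected). A set $S$ is a split independent set if $S$ is independent and $\langle V\setminus S\rangle$ is disconnected or a $K_1$. A split independent set $S$ is a maximal split independent set if for every $v\in V\setminus S$, either $S\cup\{v\}$ is not independent, or $\langle V\setminus (S\cup\{v\})\rangle$ is connected. *)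

(* A finite simple graph is a symmetric irreflexive
   relation e on a finType T (vertex set V = T). *)
From mathcomp Require Import all_boot.
Set Implicit Arguments. Unset Strict Implicit. Unset Printing Implicit Defensive.

Section Graphs.
Variable T : finType.
Variable e : rel T.

Definition simple_graph := symmetric e /\ irreflexive e.
Definition graph_connected := forall x y : T, connect e x y.
Definition no_isolated := forall x : T, exists y, e x y.

Definition induced_rel (X : {set T}) : rel T :=
  [rel x y | [&& x \in X, y \in X & e x y]].

Definition induced_disconnected (X : {set T}) :=
  exists x y, [/\ x \in X, y \in X & ~~ connect (induced_rel X) x y].

Definition disc_or_K1 (X : {set T}) := induced_disconnected X \/ #|X| = 1.

Definition dominating (D : {set T}) :=
  forall v, v \in ~: D -> exists2 u, u \in D & e v u.

Definition independent (S : {set T}) :=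
  forall x y, x \in S -> y \in S -> ~~ e x y.

Definition split_dominating (S : {set T}) := dominating S /\ disc_or_K1 (~: S).

Definition minimal_split_dominating (S : {set T}) :=
  split_dominating S /\ forall u, u \in S -> ~ split_dominating (S :\ u).

Definition split_independent (S : {set T}) := independent S /\ disc_or_K1 (~: S).

Definition maximal_split_independent (S : {set T}) :=
  split_independent S /\ forall v, v \in ~: S -> ~ split_independent (v |: S).

End Graphs.

(* A vertex v outside a maximal split independent set S must have a neighbour
   in S: otherwise v |: S is still independent, and deleting v from the
   disconnected graph <V - S> keeps it disconnected, because v has a
   neighbour w outside S that can stand in for v in its component (and
   <V - S> is not K_1, as it contains both v and w).  Minimality is immediate:
   by independence, u \in S has no neighbour in S :\ u. *)
From mathcomp Require Import all_boot.

Set Implicit Arguments.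
Unset Strict Implicit.
Unset Printing Implicit Defensive.

Section SplitSets.
Variables (T : finType) (e : rel T).
Hypothesis e_sym : symmetric e.
Hypothesis e_irr : irreflexive e.

Lemma connect_induced_subset (A B : {set T}) x y :
  A \subset B -> connect (induced_rel e A) x y -> connect (induced_rel e B) x y.
Proof.
move=> sAB; apply: connect_sub => a b /and3P[aA bA eab].
by apply: connect1; rewrite /induced_rel /= (subsetP sAB a aA) (subsetP sAB b bA).
Qed.

Lemma induced_disconnectedD1 (X : {set T}) v w :
  w \in X -> e v w -> induced_disconnected e X -> induced_disconnected e (X :\ v).
Proof.
move=> wX evw [x [y [xX yX not_xy]]].
have wv : w != v by apply: contraTneq evw => ->; rewrite e_irr.
pose f z := if z == v then w else z.
have fX z : z \in X -> f z \in X :\ v.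
  by rewrite /f; case: eqP => [_|/eqP zv]; rewrite !inE ?wv ?zv.
have f_conn z : z \in X -> connect (induced_rel e X) z (f z) /\
                           connect (induced_rel e X) (f z) z.
  rewrite /f; case: eqP => [-> vX|_ _]; last by split; apply: connect0.
  by split; apply: connect1; rewrite /induced_rel /= vX wX // e_sym.
exists (f x), (f y); split; [exact: fX | exact: fX |].
apply: contra not_xy => /(connect_induced_subset (subD1set X v)) c.
have [cx _] := f_conn x xX; have [_ cy] := f_conn y yX.
exact: connect_trans cx (connect_trans c cy).
Qed.

Lemma disc_or_K1D1 (X : {set T}) v w :
  v \in X -> w \in X -> e v w -> disc_or_K1 e X -> disc_or_K1 e (X :\ v).
Proof.
move=> vX wX evw [Xdisc|X1]; first by left; exact: induced_disconnectedD1 evw Xdisc.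
have wv : w != v by apply: contraTneq evw => ->; rewrite e_irr.
have : #|[set v; w]| <= #|X|.
  by apply/subset_leq_card/subsetP => z; rewrite !inE => /orP[] /eqP ->.
by rewrite X1 cards2 eq_sym wv.
Qed.

Lemma independentU1 (S : {set T}) v :
  independent e S -> (forall u, u \in S -> ~~ e v u) -> independent e (v |: S).
Proof.
move=> indS vS x y; rewrite !inE => /predU1P[->|xS] /predU1P[->|yS].
- by rewrite e_irr.
- exact: vS.
- by rewrite e_sym; apply: vS.
- exact: indS.
Qed.

Lemma maximal_split_independent_dominating (S : {set T}) :
  no_isolated e -> maximal_split_independent e S -> dominating e S.
Proof.
move=> noiso [[indS splitS] maxS] v vS.
have [/existsP[u /andP[uS evu]]|/existsPn no_nbr] :=
  boolP [exists u, (u \in S) && e v u]; first by exists u.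
exfalso; apply: (maxS v vS); split.
  by apply: independentU1 => // u uS; have := no_nbr u; rewrite uS.
have [w evw] := noiso v.
have wS : w \in ~: S by rewrite inE; have := no_nbr w; rewrite evw andbT.
by rewrite setCU setIC -setDE; apply: disc_or_K1D1 evw splitS.
Qed.

Lemma independent_not_dominatingD1 (S : {set T}) u :
  independent e S -> u \in S -> ~ dominating e (S :\ u).
Proof.
move=> indS uS domS.
have uC : u \in ~: (S :\ u) by rewrite !inE eqxx.
have [z] := domS u uC.
by rewrite !inE => /andP[_ zS]; apply/negP/indS.
Qed.

End SplitSets.

Theorem mainTheorem2 (T : finType) (e : rel T) :
  simple_graph e -> graph_connected e -> no_isolated e ->
  (exists S : {set T}, split_independent e S) ->
  forall S : {set T}, maximal_split_independent e S -> minimal_split_dominating e S.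
Proof.
move=> [e_sym e_irr] _ noiso _ S maxS.
have domS := maximal_split_independent_dominating e_sym e_irr noiso maxS.
have [[indS splitS] _] := maxS.
split; first by split.
by move=> u uS [domSu _]; exact: independent_not_dominatingD1 indS uS domSu.
Qed.
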